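(* Let $p$ be a prime, $e\geq 2$, $N=\langle\sigma\rangle$ cyclic of order $p^e$, and let $a$ be an integer with $a\equiv 1\pmod p$, and $u$ any integer. (a) If $p$ is odd, then the order of $[\sigma^u,\varphi_a]$ in $\mathrm{Hol}(N)$ is $\max\{p^{e-v_p(u)},|\varphi_a|\}$. (b) If $p=2$, then the order of $[\sigma^u,\varphi_a]$ is $\max\{2^{e-v_2(u)},|\varphi_a|\}$ if $a\equiv 1\pmod 4$, and $\max\{2^{e-v_2(u)-v_2(\frac{a+1}{2})},|\varphi_a|\}$ if $a\equiv 3\pmod 4$.
   Context: For an integer $a$ coprime to $p$, $\varphi_a\in\mathrm{Aut}(N)$ is $\sigma\mapsto\sigma^a$. Elements of $\mathrm{Hol}(N)=N\rtimes\mathrm{Aut}(N)$ are written $[\sigma^u,\varphi_a]$ with $[\sigma^u,\varphi_a][\sigma^v,\varphi_b]=[\sigma^{u+va},\varphi_{ab}]$. $v_p(m)$ is the $p$-adic valuation of $m$, with $v_p(0)=\infty$ (so that $p^{e-v_p(u)}$ is interpreted as $1$ when $\sigma^u=1$, i.e. exponents below $0$ give order $1$). *)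

From Stdlib Require Import ClassicalEpsilon.
From mathcomp Require Import all_boot all_order all_algebra.
Set Implicit Arguments. Unset Strict Implicit. Unset Printing Implicit Defensive.
Import Order.TTheory GRing.Theory Num.Theory.
Local Open Scope ring_scope.

(* Holomorph Hol(N) of N = <sigma> cyclic of order n, modelled concretely:
   the element [sigma^u, phi_a] is the pair (u, a) of integers, read modulo n
   (a is meant to be a unit mod n).  Multiplication follows the paper:
   [sigma^u,phi_a][sigma^v,phi_b] = [sigma^(u+va), phi_(ab)]. *)
Definition hol_mul (n : nat) (x y : int * int) : int * int :=
  (((x.1 + y.1 * x.2) %% n)%Z, ((x.2 * y.2) %% n)%Z).

Definition hol_pow (n : nat) (x : int * int) (k : nat) : int * int :=
  iter k (hol_mul n x) (0, 1).

Definition hol_eq (n : nat) (x y : int * int) : bool :=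
  ((x.1 == y.1 %[mod n])%Z) && ((x.2 == y.2 %[mod n])%Z).

(* least positive k with P k (0 if none exists) *)
Definition least_pos (P : pred nat) : nat :=
  match excluded_middle_informative (exists k, (0 < k)%N && P k) with
  | left H => ex_minn H
  | right _ => 0%N
  end.

Definition hol_order (n : nat) (x : int * int) : nat :=
  least_pos (fun k => hol_eq n (hol_pow n x k) (0, 1)).

Definition aut_order (n : nat) (a : int) : nat := hol_order n (0, a).

(* p ^ (e - v_p(x_1) - ... - v_p(x_k)), with v_p(0) = infinity and negative
   exponents giving 1 (truncated subtraction on nat). *)
Definition ppow_val (p e : nat) (xs : seq int) : nat :=
  if has (fun x : int => x == 0) xs then 1%N
  else (p ^ (e - \sum_(x <- xs) logn p `|x|%N))%N.

(* Since (u, a)^k = (u (1 + a + ... + a^(k-1)), a^k) = (u S_k(a), a^k), the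
   element (u, a) has order dividing k iff p^e divides both u S_k(a) and
   a^k - 1 = (a - 1) S_k(a).  When a = 1 mod p (mod 4 if p = 2), lifting the
   exponent gives v_p(S_k(a)) = v_p(k), so both conditions say that v_p(k)
   reaches a threshold, and the order is p to the larger threshold.  When p = 2
   and a = 3 mod 4, a^k - 1 is not divisible by 4 for odd k, while
   S_(2j)(a) = (1 + a) S_j(a^2) with a^2 = 1 mod 4 reduces even k to the first
   case for (u (1 + a), a^2). *)

From Stdlib Require Import ClassicalEpsilon.
From mathcomp Require Import all_boot all_order all_algebra.
From mathcomp Require Import ring zify.
Set Implicit Arguments. Unset Strict Implicit. Unset Printing Implicit Defensive.
Import Order.TTheory GRing.Theory Num.Theory.
Local Open Scope ring_scope.

Definition geom (R : comPzRingType) (a : R) (k : nat) : R := \sum_(i < k) a ^+ i.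

Section GeometricSum.
Variable R : comPzRingType.
Implicit Types (a : R) (k m n : nat).

Lemma geom0 a : geom a 0 = 0.
Proof. by rewrite /geom big_ord0. Qed.

Lemma geomS a k : geom a k.+1 = geom a k + a ^+ k.
Proof. by rewrite /geom big_ord_recr. Qed.

Lemma geomSl a k : geom a k.+1 = 1 + a * geom a k.
Proof.
rewrite /geom big_ord_recl expr0 mulr_sumr.
by congr (_ + _); apply: eq_bigr => i _; rewrite exprS.
Qed.

Lemma geom2 a : geom a 2 = 1 + a.
Proof. by rewrite geomSl geomS geom0 expr0 add0r mulr1. Qed.

Lemma geomD a m n : geom a (m + n) = geom a m + a ^+ m * geom a n.
Proof.
elim: n => [|n IHn]; first by rewrite addn0 geom0 mulr0 addr0.
by rewrite addnS !geomS IHn exprD; ring.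
Qed.

Lemma geomM a m n : geom a (m * n) = geom a m * geom (a ^+ m) n.
Proof.
elim: n => [|n IHn]; first by rewrite muln0 !geom0 mulr0.
by rewrite mulnSr geomD IHn geomS -exprM; ring.
Qed.

Lemma geom_sub_nat a k : geom a k - k%:R = (a - 1) * \sum_(i < k) geom a i.
Proof.
elim: k => [|k IHk]; first by rewrite geom0 big_ord0; ring.
by rewrite big_ord_recr mulrDr -IHk /= -subrX1 geomS mulrSr; ring.
Qed.

End GeometricSum.

Lemma dvdz_geom_sub_nat (d a : int) k : (d %| a - 1)%Z -> (d %| geom a k - k%:Z)%Z.
Proof. by move=> d_a1; rewrite -natz geom_sub_nat dvdz_mulr. Qed.

Lemma dvdz_subX1 (d a : int) m : (d %| a - 1)%Z -> (d %| a ^+ m - 1)%Z.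
Proof. by move=> d_a1; rewrite subrX1 dvdz_mulr. Qed.

Lemma hol_powSE n u a k :
  hol_pow n (u, a) k.+1 = ((u * geom a k.+1) %% n, a ^+ k.+1 %% n)%Z.
Proof.
elim: k => [|k IHk].
  by rewrite /hol_pow /hol_mul /= geomS geom0 expr0 add0r mul0r addr0 !mulr1.
rewrite /hol_pow iterS -/(hol_pow n (u, a) k.+1) IHk /hol_mul /=.
rewrite -modzDmr modzMml modzDmr modzMmr (geomSl a k.+1) (exprS a k.+1).
by congr ((_ %% _)%Z, _); ring.
Qed.

Lemma hol_pow_eq1 n u a k : (0 < k)%N ->
  hol_eq n (hol_pow n (u, a) k) (0, 1)
  = (n%:Z %| u * geom a k)%Z && (n%:Z %| a ^+ k - 1)%Z.
Proof.
by case: k => // k _; rewrite hol_powSE /hol_eq /= !modz_mod !eqz_mod_dvd subr0.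
Qed.

Lemma least_pos_logn p c (P : pred nat) : prime p ->
  (forall k, (0 < k)%N -> P k = (c <= logn p k)%N) -> least_pos P = (p ^ c)%N.
Proof.
move=> p_pr P_logn.
have pc_gt0 : (0 < p ^ c)%N by rewrite expn_gt0 prime_gt0.
have P_pc : P (p ^ c)%N by rewrite P_logn // pfactorK.
rewrite /least_pos; case: excluded_middle_informative => [P_ex|]; last first.
  by case; exists (p ^ c)%N; rewrite pc_gt0 P_pc.
case: ex_minnP => m /andP[m_gt0 P_m] m_min.
apply/eqP; rewrite eqn_leq m_min ?pc_gt0 ?P_pc //=.
by rewrite dvdn_leq // pfactor_dvdn // -P_logn.
Qed.

(* p ^ ord_exp p e x is the additive order of x modulo p ^ e. *)
Definition ord_exp (p e : nat) (x : int) : nat :=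
  if x == 0 then 0%N else (e - logn p `|x|)%N.

Lemma ord_exp0 p e : ord_exp p e 0 = 0%N.
Proof. by rewrite /ord_exp eqxx. Qed.

Lemma ppow_val1 p e x : ppow_val p e [:: x] = (p ^ ord_exp p e x)%N.
Proof. by rewrite /ppow_val /= orbF big_seq1 /ord_exp; case: eqP. Qed.

Lemma expn_maxn p m n : (0 < p)%N -> (p ^ maxn m n = maxn (p ^ m) (p ^ n))%N.
Proof.
move=> p_gt0; have [m_le_n | n_lt_m] := leqP m n.
  by apply/esym/maxn_idPr; rewrite leq_pexp2l.
by apply/esym/maxn_idPl; rewrite leq_pexp2l // ltnW.
Qed.

Lemma dvdz_pfactor p e (x : int) : prime p ->
  ((p ^ e)%:Z %| x)%Z = (x == 0) || (e <= logn p `|x|)%N.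
Proof.
move=> p_pr; have [->|x_neq0] := eqVneq x 0; first by rewrite dvdz0.
by rewrite dvdzE /= pfactor_dvdn // absz_gt0.
Qed.

Lemma dvdz_pfactor_mul p e (x y : int) : prime p -> y != 0 ->
  ((p ^ e)%:Z %| x * y)%Z = (ord_exp p e x <= logn p `|y|)%N.
Proof.
move=> p_pr y_neq0; rewrite dvdz_pfactor // mulf_eq0 (negbTE y_neq0) orbF /ord_exp.
by case: eqVneq => //= x_neq0; rewrite abszM lognM ?absz_gt0 //; lia.
Qed.

Lemma logn_eq1_of_dvdz_sub p (x : int) : prime p -> ((p ^ 2)%:Z %| x - p%:Z)%Z ->
  x != 0 /\ logn p `|x| = 1%N.
Proof.
move=> p_pr p2_dvd.
have p2_ndvd_p : ~~ ((p ^ 2)%:Z %| p%:Z)%Z.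
  by rewrite dvdzE /= pfactor_dvdn ?prime_gt0 // logn_prime // eqxx.
have p2_ndvd_x : ~~ ((p ^ 2)%:Z %| x)%Z.
  by apply: contra p2_ndvd_p => p2_x; rewrite -[p%:Z](subKr x) rpredB.
have p_dvd_x : ((p ^ 1)%:Z %| x)%Z.
  rewrite -(subrK p%:Z x) rpredD ?expn1 ?dvdzz //.
  by apply: dvdz_trans p2_dvd; rewrite dvdzE /= dvdn_exp.
move: p2_ndvd_x p_dvd_x; rewrite !dvdz_pfactor //.
by case: eqVneq => //= x_neq0 logn_lt2 logn_ge1; split=> //; lia.
Qed.

(* The hypothesis of the lifting-the-exponent lemma [geom_lte]. *)
Definition lte_cond (p : nat) (a : int) : bool :=
  (p%:Z %| a - 1)%Z && ((p == 2%N) ==> (4 %| a - 1)%Z).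

Lemma lte_condX p a m : lte_cond p a -> lte_cond p (a ^+ m).
Proof.
case/andP=> p_a1 four_a1; rewrite /lte_cond dvdz_subX1 //=.
by apply/implyP=> /(implyP four_a1)/dvdz_subX1.
Qed.

Lemma dvdz_geom_p_sub p a : prime p -> lte_cond p a ->
  ((p ^ 2)%:Z %| geom a p - p%:Z)%Z.
Proof.
move=> p_pr /andP[p_a1 four_a1].
have [p2|p_neq2] := eqVneq p 2%N.
  move: four_a1; rewrite p2 geom2 /= => four_a1.
  by have -> : 1 + a - 2%:Z = a - 1 by ring.
have p_gt2 : (2 < p)%N by rewrite ltn_neqAle eq_sym p_neq2 prime_gt1.
rewrite -natz geom_sub_nat expnS expn1 PoszM dvdz_mul //.
have -> : \sum_(i < p) geom a i = \sum_(i < p) (geom a i - i%:R) + 'C(p, 2)%:R.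
  by rewrite sumrB -bin2_sum big_mkord natr_sum subrK.
rewrite rpredD ?rpred_sum // => [i _|]; first by rewrite natz dvdz_geom_sub_nat.
by rewrite natz dvdzE /= prime_dvd_bin.
Qed.

Lemma geom_lte p a k : prime p -> lte_cond p a -> (0 < k)%N ->
  geom a k != 0 /\ logn p `|geom a k| = logn p k.
Proof.
move=> p_pr; elim/ltn_ind: k a => k IHk a a_cond k_gt0.
have [p_dvd_k | p_ndvd_k] := boolP (p %| k)%N.
  have def_k : k = (p * (k %/ p))%N by rewrite mulnC divnK.
  have k'_gt0 : (0 < k %/ p)%N by rewrite divn_gt0 ?prime_gt0 // dvdn_leq.
  have k'_lt_k : (k %/ p < k)%N by rewrite ltn_Pdiv ?prime_gt1.
  have [g'_neq0 logn_g'] := IHk _ k'_lt_k _ (lte_condX p a_cond) k'_gt0.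
  have [gp_neq0 logn_gp] := logn_eq1_of_dvdz_sub p_pr (dvdz_geom_p_sub p_pr a_cond).
  rewrite def_k geomM mulf_neq0 // abszM (lognM _ (prime_gt0 p_pr) k'_gt0).
  by rewrite lognM ?absz_gt0 // logn_gp logn_g' (logn_prime p p_pr) eqxx.
have p_ndvd_g : ~~ (p%:Z %| geom a k)%Z.
  apply: contra p_ndvd_k => p_dvd_g; have [p_a1 _] := andP a_cond.
  suff : (p%:Z %| k%:Z)%Z by rewrite dvdzE.
  by rewrite -[k%:Z](subKr (geom a k)) rpredB // dvdz_geom_sub_nat.
have g_neq0 : geom a k != 0 by apply: contraNneq p_ndvd_g => ->; apply: dvdz0.
by rewrite !logn_coprime // prime_coprime.
Qed.

Section LiftingTheExponent.
Variables (p : nat) (a : int).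
Hypotheses (p_prime : prime p) (a_cond : lte_cond p a).

Lemma dvdz_mul_geom e x k : (0 < k)%N ->
  ((p ^ e)%:Z %| x * geom a k)%Z = (ord_exp p e x <= logn p k)%N.
Proof.
move=> k_gt0; have [g_neq0 logn_g] := geom_lte p_prime a_cond k_gt0.
by rewrite dvdz_pfactor_mul // logn_g.
Qed.

Lemma dvdz_geom_subX1_lte e u k : (0 < k)%N ->
  ((p ^ e)%:Z %| u * geom a k)%Z && ((p ^ e)%:Z %| a ^+ k - 1)%Z
  = (maxn (ord_exp p e u) (ord_exp p e (a - 1)) <= logn p k)%N.
Proof. by move=> k_gt0; rewrite subrX1 !dvdz_mul_geom // geq_max. Qed.

Lemma hol_order_lte e u :
  hol_order (p ^ e) (u, a) = (p ^ maxn (ord_exp p e u) (ord_exp p e (a - 1)))%N.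
Proof.
by apply: least_pos_logn => // k k_gt0; rewrite hol_pow_eq1 // dvdz_geom_subX1_lte.
Qed.

Lemma hol_order_lte_maxn e u :
  hol_order (p ^ e) (u, a) = maxn (ppow_val p e [:: u]) (aut_order (p ^ e) a).
Proof.
by rewrite /aut_order !hol_order_lte ord_exp0 max0n ppow_val1 -expn_maxn ?prime_gt0.
Qed.

End LiftingTheExponent.

Section ThreeModFour.
Variables (e : nat) (a : int).
Hypotheses (e_ge2 : (2 <= e)%N) (a_3mod4 : (4 %| a - 3)%Z).

Let two_dvd_a3 : (2 %| a - 3)%Z.
Proof. exact: dvdz_trans a_3mod4. Qed.

Let four_ndvd_a1 : ~~ (4 %| a - 1)%Z.
Proof.
apply/negP => four_a1; have : (4 %| (a - 1) - (a - 3))%Z by rewrite rpredB.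
by have -> : (a - 1) - (a - 3) = 2 by ring.
Qed.

Lemma lte_cond_sqr : lte_cond 2 (a ^+ 2).
Proof.
have four_dvd : (4 %| a ^+ 2 - 1)%Z.
  have -> : a ^+ 2 - 1 = (a - 3 + 2) * (a - 3 + 4) by ring.
  by rewrite (_ : 4 = 2 * 2) // dvdz_mul // rpredD.
by rewrite /lte_cond four_dvd andbT (dvdz_trans _ four_dvd).
Qed.

Lemma ndvdz_subX1_odd k : odd k -> ~~ ((2 ^ e)%:Z %| a ^+ k - 1)%Z.
Proof.
move=> k_odd; apply: contra four_ndvd_a1 => dvd_ak1.
have {dvd_ak1} four_ak1 : (4 %| a ^+ k - 1)%Z.
  by apply: dvdz_trans dvd_ak1; rewrite dvdzE /= -(subnKC e_ge2) expnD dvdn_mulr.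
have [j def_k] : exists j, k = (2 * j).+1.
  by exists k./2; rewrite -{1}(odd_double_half k) k_odd mul2n.
have -> : a - 1 = (a ^+ k - 1) - a * ((a ^+ 2) ^+ j - 1).
  by rewrite def_k exprS exprM; ring.
have [_ four_sqr_a1] := andP lte_cond_sqr.
by rewrite rpredB // dvdz_mull // dvdz_subX1.
Qed.

Lemma dvdz_geom_subX1_3mod4 u k : (0 < k)%N ->
  ((2 ^ e)%:Z %| u * geom a k)%Z && ((2 ^ e)%:Z %| a ^+ k - 1)%Z
  = ((maxn (ord_exp 2 e (u * (a + 1))) (ord_exp 2 e (a ^+ 2 - 1))).+1 <= logn 2 k)%N.
Proof.
move=> k_gt0; have [k_odd | k_even] := boolP (odd k).
  rewrite (negbTE (ndvdz_subX1_odd k_odd)) andbF.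
  by rewrite logn_coprime ?ltn0 // prime_coprime // dvdn2 k_odd.
have [j def_k] : exists j, k = (2 * j)%N.
  by exists k./2; rewrite -{1}(odd_double_half k) (negbTE k_even) mul2n.
have j_gt0 : (0 < j)%N by move: k_gt0; rewrite def_k muln_gt0.
rewrite def_k geomM geom2 mulrA exprM (addrC 1).
by rewrite dvdz_geom_subX1_lte ?lte_cond_sqr // lognM // logn_prime.
Qed.

Lemma hol_order_3mod4 u : hol_order (2 ^ e) (u, a)
  = (2 ^ (maxn (ord_exp 2 e (u * (a + 1))) (ord_exp 2 e (a ^+ 2 - 1))).+1)%N.
Proof.
by apply: least_pos_logn => // k k_gt0; rewrite hol_pow_eq1 // dvdz_geom_subX1_3mod4.
Qed.

Lemma hol_order_3mod4_maxn u : hol_order (2 ^ e) (u, a)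
  = maxn (ppow_val 2 e [:: u; ((a + 1) %/ 2)%Z]) (aut_order (2 ^ e) a).
Proof.
have two_dvd_a1 : (2 %| a + 1)%Z.
  have -> : a + 1 = a - 3 + 4 by ring.
  by rewrite rpredD.
rewrite /aut_order !hol_order_3mod4 mul0r ord_exp0 max0n.
set w := ((a + 1) %/ 2)%Z; set B := ord_exp 2 e (a ^+ 2 - 1).
have -> : a + 1 = w * 2 by rewrite divzK.
clearbody w.
rewrite /ppow_val /= orbF big_cons big_seq1 /ord_exp mulrA !mulf_eq0 orbF.
have [-> | u_neq0] /= := eqVneq u 0.
  by rewrite max0n; apply/esym/maxn_idPr; rewrite expn_gt0.
case: eqVneq => [_ | w_neq0].
  by rewrite max0n; apply/esym/maxn_idPr; rewrite expn_gt0.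
rewrite !abszM !lognM ?muln_gt0 ?absz_gt0 ?u_neq0 ?w_neq0 // -expn_maxn //.
by congr (2 ^ _)%N; rewrite (logn_prime 2 (isT : prime 2)) /=; lia.
Qed.

End ThreeModFour.

Theorem lemma3p2 (p e : nat) (a u : int) :
  prime p -> (2 <= e)%N -> (a == 1 %[mod p])%Z ->
  (odd p ->
     hol_order (p ^ e) (u, a) = maxn (ppow_val p e [:: u]) (aut_order (p ^ e) a))
  /\
  (p = 2%N ->
     ((a == 1 %[mod 4])%Z ->
        hol_order (2 ^ e) (u, a) = maxn (ppow_val 2 e [:: u]) (aut_order (2 ^ e) a))
     /\
     ((a == 3 %[mod 4])%Z ->
        hol_order (2 ^ e) (u, a)
        = maxn (ppow_val 2 e [:: u; ((a + 1) %/ 2)%Z]) (aut_order (2 ^ e) a))).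
Proof.
move=> p_prime e_ge2; rewrite eqz_mod_dvd => p_dvd_a1; split.
  move=> p_odd; apply: hol_order_lte_maxn => //.
  by rewrite /lte_cond p_dvd_a1; case: eqP p_odd => // ->.
move=> p2; subst p; split; rewrite eqz_mod_dvd => four_dvd.
  by apply: hol_order_lte_maxn => //; apply/andP; split; last apply/implyP.
exact: hol_order_3mod4_maxn.
Qed.
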